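(* Let $H$ be a linear forest and let $k\ge 1$, $n\ge 1$ be integers. Then for every complete $k$-partite graph $G$ on $n$ vertices (with parts $A_1,\dots,A_k$ partitioning the vertex set, some possibly empty), $$\mathcal{N}(H,G)\le \mathcal{N}(H,T(n,k)).$$
   Context: $\mathcal{N}(H,G)$ denotes the number of (not necessarily induced) subgraphs of $G$ isomorphic to $H$. A linear forest is a graph each of whose connected components is a path. The Turán graph $T(n,k)$ is the complete $k$-partite graph on $n$ vertices with each part of size $\lfloor n/k\rfloor$ or $\lceil n/k\rceil$. A complete $k$-partite graph with parts $A_1,\dots,A_k$ has an edge between two vertices exactly when they lie in different parts. *)

From mathcomp Require Import all_boot.
Set Implicit Arguments. Unset Strict Implicit. Unset Printing Implicit Defensive.

(* A simple graph on a finite type V is a symmetric irreflexive relation. *)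

Definition seq_adj (V : eqType) (s : seq V) (x y : V) : bool :=
  has (fun i => ((nth x s i == x) && (nth x s i.+1 == y))
             || ((nth x s i == y) && (nth x s i.+1 == x)))
      (iota 0 (size s).-1).

Definition is_path_on (V : finType) (e : rel V) (C : {set V}) : Prop :=
  exists s : seq V, [/\ uniq s, C =i s &
    forall x y, x \in C -> y \in C -> e x y = seq_adj s x y].

Definition linear_forest (V : finType) (e : rel V) : Prop :=
  forall x : V, is_path_on e [set y | connect e x y].

(* (W, F) is a (not necessarily induced) subgraph of G (vertex set W,
   edge set F, edges as 2-element vertex sets) isomorphic to (V, e). *)
Definition is_copy (V : finType) (e : rel V) (n : nat) (G : rel 'I_n)
    (W : {set 'I_n}) (F : {set {set 'I_n}}) : bool :=
  [forall A in F, exists x, exists y,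
      [&& x \in W, y \in W, G x y & A == [set x; y]]] &&
  [exists f : {ffun V -> 'I_n},
      [&& injectiveb f, f @: [set: V] == W &
          [forall x, forall y, e x y == ([set f x; f y] \in F)]]].

Definition Ncopies (V : finType) (e : rel V) (n : nat) (G : rel 'I_n) : nat :=
  #|[set WF : {set 'I_n} * {set {set 'I_n}} | is_copy e G WF.1 WF.2]|.

(* Complete k-partite graph with parts A_j = p^-1(j) (possibly empty). *)
Definition kpartite (n k : nat) (p : 'I_n -> 'I_k) : rel 'I_n :=
  fun x y => p x != p y.

Definition ceil_div (n k : nat) : nat := n %/ k + (~~ (k %| n)).

Definition turan_parts (n k : nat) (q : 'I_n -> 'I_k) : bool :=
  [forall j : 'I_k, (#|[set x | q x == j]| == n %/ k)
                    || (#|[set x | q x == j]| == ceil_div n k)].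

From mathcomp Require Import all_boot fingroup perm zify.
Set Implicit Arguments. Unset Strict Implicit. Unset Printing Implicit Defensive.

(* N(H, G) * |Aut H| is the number of embeddings of H into G, so it suffices to
   compare embeddings.  In a complete multipartite graph, fix two parts A_i, A_j
   and the images of the vertices of H sent outside them; the embeddings
   extending these data are counted by summing, over the proper 2-colourings of
   the remaining vertex set S of H, the products x^(a) y^(b) of falling
   factorials, where x = |A_i|, y = |A_j| and a, b are the colour class sizes.
   When H is a linear forest, peeling a leaf of S shows that this sum has the
   form x^(M) y^(M) g(x + y), which does not decrease when a vertex moves from
   the larger part to the smaller one.  Such moves reach the part sizes of the
   Turan graph, and multipartite graphs with equal part sizes are isomorphic. *)

Lemma sum_fibers (T T' : finType) (A : {set T}) (B : {set T'}) (r : T -> T')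
    (F : T -> nat) (G : T' -> nat) :
  {in A, forall a, r a \in B} ->
  {in B, forall b, \sum_(a in A | r a == b) F a = G b} ->
  \sum_(a in A) F a = \sum_(b in B) G b.
Proof.
move=> rAB fibers; rewrite (partition_big r (mem B)) //=.
by apply: eq_bigr => b Bb; rewrite -fibers.
Qed.

Lemma ltn_sum (k : nat) (F G : 'I_k -> nat) (i : 'I_k) :
  (forall j, F j <= G j) -> F i < G i -> \sum_(j < k) F j < \sum_(j < k) G j.
Proof.
move=> leFG ltFG; rewrite (bigD1 i) //= [X in _ < X](bigD1 i) //= -addSn.
by apply: leq_add => //; apply: leq_sum.
Qed.

Lemma eq_of_leq_sum (k : nat) (F G : 'I_k -> nat) :
  (forall j, F j <= G j) -> \sum_(j < k) F j = \sum_(j < k) G j -> forall j, F j = G j.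
Proof.
move=> leFG sumFG j; apply/eqP; rewrite eqn_leq leFG leqNgt; apply/negP => /(ltn_sum leFG).
by rewrite sumFG ltnn.
Qed.

Lemma exists_lt_of_sum_eq (k : nat) (F G : 'I_k -> nat) (i : 'I_k) :
  \sum_(j < k) F j = \sum_(j < k) G j -> G i < F i -> exists j, F j < G j.
Proof.
move=> sumFG ltGF; apply/existsP; apply: contraT; rewrite negb_exists => /forallP ltFG.
have leGF j : G j <= F j by rewrite leqNgt ltFG.
by have := ltn_sum leGF ltGF; rewrite sumFG ltnn.
Qed.

Lemma ffact_mul_step x y m l :
  x ^_ m.+1 * y ^_ l + x ^_ m * y ^_ l.+1 = x ^_ m * y ^_ l * (x + y - (m + l)).
Proof.
rewrite !ffactnSr.
have [xm|mx] := ltnP x m; first by rewrite ffact_small.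
have [yl|ly] := ltnP y l; first by rewrite (ffact_small yl) !muln0 !mul0n.
have -> : x + y - (m + l) = (x - m) + (y - l) by lia.
by rewrite mulnDr; congr (_ + _); [rewrite mulnAC | rewrite mulnA].
Qed.

Lemma ffact_mul_balance x y M : y < x -> x ^_ M * y ^_ M <= x.-1 ^_ M * y.+1 ^_ M.
Proof.
move=> yx; elim: M => [|M IH]; first by rewrite !ffactn0.
rewrite !ffactnSr mulnACA [X in _ <= X]mulnACA; apply: leq_mul => //.
have [yM|My] := ltnP y M.
  by rewrite (_ : y - M = 0) ?muln0 //; apply/eqP; rewrite subn_eq0 ltnW.
rewrite (_ : x.-1 - M = (x - M).-1) 1?(_ : y.+1 - M = (y - M).+1); lia.
Qed.

Lemma ffact_mul_pair x y m l (b : bool) :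
  x ^_ (b + (~~ b + m)) * y ^_ (~~ b + (~~ ~~ b + l)) = x * y * (x.-1 ^_ m * y.-1 ^_ l).
Proof.
have -> : b + (~~ b + m) = m.+1 by case: b.
have -> : ~~ b + (~~ ~~ b + l) = l.+1 by case: b.
by rewrite !ffactnS mulnACA.
Qed.

(* The form of colour_sum for a linear forest: as g only sees x + y, moving one
   unit from the larger of x, y to the smaller cannot decrease it. *)
Definition balanced_form (f : nat -> nat -> nat) : Prop :=
  exists M (g : nat -> nat), forall x y, f x y = x ^_ M * y ^_ M * g (x + y).

Lemma balanced_form_le f x y : balanced_form f -> y < x -> f x y <= f x.-1 y.+1.
Proof.
move=> [M [g fE]] yx; rewrite !fE (_ : x.-1 + y.+1 = x + y); last by lia.
by apply: leq_mul => //; apply: ffact_mul_balance.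
Qed.

Lemma balanced_form_const (f : nat -> nat -> nat) :
  (forall x y, f x y = 1) -> balanced_form f.
Proof. by move=> fE; exists 0, (fun _ => 1) => x y; rewrite fE !ffactn0. Qed.

Lemma balanced_form_linear f f' c : balanced_form f ->
  (forall x y, f' x y = (x + y - c) * f x y) -> balanced_form f'.
Proof.
move=> [M [g fE]] f'E; exists M, (fun s => (s - c) * g s) => x y.
by rewrite f'E fE mulnCA.
Qed.

Lemma balanced_form_pair f f' c : balanced_form f ->
  (forall x y, f' x y = c * (x * y * f x.-1 y.-1)) -> balanced_form f'.
Proof.
move=> [M [g fE]] f'E; exists M.+1, (fun s => c * g (s - 2)) => x y.
rewrite f'E fE !ffactnS.
case: x => [|x]; first by rewrite !(muln0, mul0n).
case: y => [|y]; first by rewrite !(muln0, mul0n).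
rewrite /= (_ : x.+1 + y.+1 - 2 = x + y); last by lia.
by move: (x ^_ M) (y ^_ M) (g (x + y)) => a b e; nia.
Qed.

Lemma seq_adj_nth (V : eqType) (s : seq V) a b : uniq s -> seq_adj s a b ->
  b = nth a s (index a s).+1 \/ 0 < index a s /\ b = nth a s (index a s).-1.
Proof.
move=> us /hasP [i]; rewrite mem_iota add0n => /andP [_ ilt].
have [il il1] : i < size s /\ i.+1 < size s by move: ilt; case: (size s) => //=; lia.
case/orP => /andP [/eqP ai /eqP bi].
  by left; have -> : index a s = i by rewrite -{1}ai index_uniq.
by right; have -> : index a s = i.+1 by rewrite -{1}bi index_uniq.
Qed.

Section LinearForest.
Variables (V : finType) (h : rel V).
Hypothesis h_lf : linear_forest h.

Lemma linear_forest_deg_le2 w : exists a b, forall y, h w y -> y = a \/ y = b.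
Proof.
have [s [us Cs adj]] := h_lf w.
exists (nth w s (index w s).+1), (nth w s (index w s).-1) => y hwy.
have wC : w \in [set z | connect h w z] by rewrite inE connect0.
have yC : y \in [set z | connect h w z] by rewrite inE connect1.
by move: hwy; rewrite adj // => /(seq_adj_nth us) [->|[_ ->]]; [left|right].
Qed.

Lemma linear_forest_third_nbr w u z t :
  h w u -> h w z -> h w t -> u != z -> t != u -> t = z.
Proof.
have [a [b ab]] := linear_forest_deg_le2 w.
move=> /ab [] -> /ab [] -> /ab [] -> //; by rewrite eqxx.
Qed.

(* Witness: the first vertex of S on the path of a component meeting S. *)
Lemma linear_forest_leaf (S : {set V}) : S != set0 ->
  exists2 u, u \in S & {in S &, forall y1 y2, h u y1 -> h u y2 -> y1 = y2}.
Proof.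
case/set0Pn => x0 x0S.
have [s [us Cs adj]] := h_lf x0.
have hasS : has (mem S) s by apply/hasP; exists x0; rewrite // -Cs inE connect0.
set j := find (mem S) s; set u := nth x0 s j.
have uS : u \in S := nth_find x0 hasS.
have uC : u \in [set z | connect h x0 z] by rewrite Cs mem_nth // -has_find.
have iu : index u s = j by rewrite index_uniq // -has_find.
suff succ y : y \in S -> h u y -> y = nth u s j.+1.
  by exists u => // y1 y2 y1S y2S /(succ _ y1S) -> /(succ _ y2S) ->.
move=> yS huy; have yC : y \in [set z | connect h x0 z].
  by move: uC; rewrite !inE => x0u; apply: connect_trans x0u (connect1 huy).
move: huy; rewrite adj // => /(seq_adj_nth us) [|[j0 yE]]; first by rewrite iu.
rewrite iu in j0 yE; rewrite yE in yS.
suff : nth u s j.-1 \notin S by rewrite yS.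
by apply/negbT/(before_find u); rewrite -/j; lia.
Qed.

End LinearForest.

Definition upd (V : finType) (T : Type) (f : {ffun V -> T}) (u : V) (t : T) :
  {ffun V -> T} := [ffun x => if x == u then t else f x].

Lemma card_sep_setU1 (V : finType) (S : {set V}) u (P : pred V) : u \notin S ->
  #|[set z in u |: S | P z]| = P u + #|[set z in S | P z]|.
Proof.
move=> uS; rewrite (cardsD1 u) inE setU11 /=; congr (_ + _).
by apply: eq_card => z; rewrite !inE; case: eqVneq => [->|]; rewrite ?(negbTE uS) ?andbF.
Qed.

Lemma card_sep_predC (T : finType) (S : {set T}) (P : pred T) :
  #|[set z in S | P z]| + #|[set z in S | ~~ P z]| = #|S|.
Proof.
by rewrite -(cardsID [set z | P z] S); congr (_ + _); apply: eq_card => z; rewrite !inE // andbC.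
Qed.

Lemma card_sep_upd (V : finType) (T : Type) (S : {set V}) (P : T -> bool)
    (f : {ffun V -> T}) u t : u \notin S ->
  #|[set z in S | P (upd f u t z)]| = #|[set z in S | P (f z)]|.
Proof.
move=> uS; apply: eq_card => z; rewrite !inE ffunE.
by case: eqVneq => [->|//]; rewrite (negbTE uS).
Qed.

Section Colourings.
Variables (V : finType) (h : rel V).
Hypotheses (h_sym : symmetric h) (h_irr : irreflexive h).

Definition colourings (S : {set V}) : {set {ffun V -> bool}} :=
  [set d : {ffun V -> bool} | [forall x, (x \notin S) ==> ~~ d x] &&
           [forall x in S, forall y in S, h x y ==> (d x != d y)]].

(* Up to choosing injections into the two sides, colour_sum S x y counts the
   embeddings of h restricted to S into the complete bipartite graph K_{x,y}. *)
Definition colour_sum (S : {set V}) (x y : nat) : nat :=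
  \sum_(d in colourings S) x ^_ #|[set z in S | d z]| * y ^_ #|[set z in S | ~~ d z]|.

Definition restr (S : {set V}) (d : {ffun V -> bool}) : {ffun V -> bool} :=
  [ffun x => (x \in S) && d x].

Lemma colouringsP (S : {set V}) (d : {ffun V -> bool}) :
  reflect ((forall x, x \notin S -> d x = false) /\ {in S &, forall x y, h x y -> d x != d y})
          (d \in colourings S).
Proof.
rewrite inE; apply: (iffP andP) => [[/forallP off /forall_inP prop]|[off prop]]; split.
- by move=> x xS; apply/negbTE; exact: (implyP (off x)).
- by move=> x y xS yS; apply/implyP; move/forall_inP: (prop x xS); apply.
- by apply/forallP => x; apply/implyP => xS; rewrite off.
- by apply/forall_inP => x xS; apply/forall_inP => y yS; apply/implyP; exact: prop.
Qed.

Lemma restr_colourings (S S' : {set V}) d :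
  S' \subset S -> d \in colourings S -> restr S' d \in colourings S'.
Proof.
move=> sS'S /colouringsP [off prop]; apply/colouringsP; split=> [x xS|x y xS yS hxy].
  by rewrite ffunE (negbTE xS).
by rewrite !ffunE xS yS; apply: prop; rewrite ?(subsetP sS'S).
Qed.

Lemma restr_id (S : {set V}) d : d \in colourings S -> restr S d = d.
Proof.
by case/colouringsP=> off _; apply/ffunP => x; rewrite ffunE; case: (boolP (x \in S)) => // /off.
Qed.

Lemma restr_upd (S : {set V}) (d : {ffun V -> bool}) u b :
  u \notin S -> restr S (upd d u b) = restr S d.
Proof.
move=> uS; apply/ffunP => x; rewrite !ffunE.
by case: eqVneq => [->|//]; rewrite (negbTE uS).
Qed.

Lemma colour_sum_set0 x y : colour_sum set0 x y = 1.
Proof.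
have sep0 (P : pred V) : [set z in set0 | P z] = set0 by apply/setP => z; rewrite !inE.
rewrite /colour_sum (big_pred1 [ffun=> false]) ?sep0 ?cards0 // => d /=.
apply/colouringsP/eqP => [[off _]|->]; last by split=> [z|z t]; rewrite ?ffunE ?inE.
by apply/ffunP => z; rewrite ffunE off ?inE.
Qed.

Section Isolated.
Variables (S : {set V}) (u : V).
Hypotheses (uS : u \notin S) (u_iso : {in S, forall t, ~~ h u t}).

Lemma colourings_fiber_isolated d : d \in colourings S ->
  [set e in colourings (u |: S) | restr S e == d] = [set upd d u b | b : bool].
Proof.
case/colouringsP=> off prop; apply/setP => e; rewrite inE; apply/andP/imsetP.
  case=> /colouringsP [offe _] /eqP <-; exists (e u) => //.
  apply/ffunP => x; rewrite !ffunE; case: eqVneq => [->//|xu].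
  by case: (boolP (x \in S)) => // xS; rewrite offe // !inE negb_or xu.
case=> b _ ->; split; last by rewrite restr_upd // restr_id //; apply/colouringsP.
apply/colouringsP; split=> [x|x y].
  by rewrite !inE negb_or ffunE => /andP [/negbTE -> /off].
rewrite !inE !ffunE => /predU1P [->|xS] /predU1P [->|yS]; rewrite ?h_irr //.
- by rewrite (negbTE (u_iso yS)).
- by rewrite h_sym (negbTE (u_iso xS)).
have neq z : z \in S -> (z == u) = false by move=> zS; apply: contraNF uS => /eqP <-.
by rewrite !neq //; exact: prop.
Qed.

Lemma colour_sum_isolated x y :
  colour_sum (u |: S) x y = (x + y - #|S|) * colour_sum S x y.
Proof.
rewrite /colour_sum big_distrr /=.
apply: (sum_fibers (r := restr S)) => [e|d dS]; first exact/restr_colourings/subsetUr.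
rewrite (eq_bigl (fun e => e \in [set upd d u b | b : bool])); last first.
  by move=> e; rewrite -colourings_fiber_isolated // !inE.
rewrite big_imset /=; last by move=> b b' _ _ /ffunP /(_ u); rewrite !ffunE eqxx.
rewrite (eq_bigl predT) // big_bool /= !card_sep_setU1 // !ffunE eqxx /=.
rewrite !(card_sep_upd id) // !(card_sep_upd negb) // add1n add0n.
by rewrite ffact_mul_step card_sep_predC mulnC.
Qed.

End Isolated.
Section Pendant.
Variables (S : {set V}) (u w : V).
Hypotheses (uS : u \notin S) (wS : w \notin S) (uw : u != w) (huw : h u w).
Hypothesis u_iso : {in S, forall t, ~~ h u t}.

(* The colours u may take, w then taking the other one, given a colouring d
   of S. *)
Definition pendant_colours (d : {ffun V -> bool}) : {set bool} :=
  [set b | [forall t in S, h w t ==> (d t == b)]].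

Lemma pendant_colours_free d :
  {in S, forall t, ~~ h w t} -> #|pendant_colours d| = 2.
Proof.
move=> w_iso; rewrite -card_bool; apply: eq_card => b; rewrite !inE.
by apply/forall_inP => t tS; rewrite (negbTE (w_iso t tS)).
Qed.

Lemma pendant_colours_forced d z : z \in S ->
  h w z -> {in S, forall t, h w t -> t = z} -> #|pendant_colours d| = 1.
Proof.
move=> zS hwz w_nbr; rewrite -(cards1 (d z)); apply: eq_card => b; rewrite !inE.
apply/forall_inP/eqP => [/(_ z zS)|-> t tS]; first by rewrite hwz => /eqP.
by apply/implyP => /(w_nbr t tS) ->.
Qed.

Lemma pendant_extension_colouring d b : d \in colourings S -> b \in pendant_colours d ->
  upd (upd d w (~~ b)) u b \in colourings (u |: (w |: S)).
Proof.
case/colouringsP=> off prop; rewrite inE => /forall_inP bP.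
have hwP t : t \in S -> h w t -> d t = b by move=> tS /(implyP (bP t tS)) /eqP.
have eu : upd (upd d w (~~ b)) u b u = b by rewrite ffunE eqxx.
have ew : upd (upd d w (~~ b)) u b w = ~~ b by rewrite !ffunE eq_sym (negbTE uw) eqxx.
have et t : t \in S -> upd (upd d w (~~ b)) u b t = d t.
  by move=> tS; rewrite !ffunE !(negbTE (elimT memPn _ t tS)).
apply/colouringsP; split=> [x|x y].
  rewrite !inE !negb_or => /and3P [xu xw xS].
  by rewrite !ffunE (negbTE xu) (negbTE xw) off.
rewrite !inE => /predU1P [->|/predU1P [->|xS]] /predU1P [->|/predU1P [->|yS]];
  rewrite ?h_irr ?eu ?ew ?et //.
- by case: (b).
- by rewrite (negbTE (u_iso yS)).
- by case: (b).
- by move/(hwP _ yS) ->; case: (b).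
- by rewrite h_sym (negbTE (u_iso xS)).
- by rewrite h_sym => /(hwP _ xS) ->; case: (b).
exact: prop.
Qed.

Lemma colourings_fiber_pendant d : d \in colourings S ->
  [set e in colourings (u |: (w |: S)) | restr S e == d] =
  [set upd (upd d w (~~ b)) u b | b in pendant_colours d].
Proof.
move=> dS; apply/setP => e; rewrite inE; apply/andP/imsetP; last first.
  case=> b bP ->; split; first exact: pendant_extension_colouring.
  by rewrite !restr_upd ?restr_id.
case=> /colouringsP [offe prope] /eqP <-.
have flip x y : x \in u |: (w |: S) -> y \in u |: (w |: S) -> h x y -> e y = ~~ e x.
  by move=> xS yS /(prope x y xS yS); case: (e x); case: (e y).
have ewu : e w = ~~ e u by rewrite (flip u w) // !inE eqxx ?orbT.
exists (e u).
  rewrite inE; apply/forall_inP => t tS; apply/implyP => hwt.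
  by rewrite ffunE tS /= (flip w t) ?ewu ?negbK // !inE ?tS ?eqxx ?orbT.
apply/ffunP => x; rewrite !ffunE; case: eqVneq => [->//|xu]; case: eqVneq => [->//|xw].
by case: (boolP (x \in S)) => // xS; rewrite offe // !inE negb_or xu negb_or xw.
Qed.

Lemma colour_sum_pendant c x y :
  {in colourings S, forall d, #|pendant_colours d| = c} ->
  colour_sum (u |: (w |: S)) x y = c * (x * y * colour_sum S x.-1 y.-1).
Proof.
move=> card_colours; rewrite /colour_sum !big_distrr /=.
apply: (sum_fibers (r := restr S)) => [e|d dS].
  by apply/restr_colourings/subsetP => z zS; rewrite !inE zS !orbT.
rewrite (eq_bigl (fun e => e \in [set upd (upd d w (~~ b)) u b | b in pendant_colours d])).
  rewrite big_imset /=; last by move=> b b' _ _ /ffunP /(_ u); rewrite !ffunE eqxx.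
  have uwS : u \notin w |: S by rewrite !inE negb_or uw.
  set rest := x.-1 ^_ #|[set z in S | d z]| * y.-1 ^_ #|[set z in S | ~~ d z]|.
  rewrite (eq_bigr (fun=> x * y * rest)).
    by rewrite sum_nat_const card_colours.
  move=> b _; rewrite !card_sep_setU1 // !(card_sep_upd id) // !(card_sep_upd negb) //.
  by rewrite !ffunE !eqxx [w == u]eq_sym (negbTE uw) ffact_mul_pair.
by move=> e; rewrite -colourings_fiber_pendant // !inE.
Qed.

End Pendant.
End Colourings.

Lemma colour_sum_balanced (V : finType) (h : rel V) (S : {set V}) :
  symmetric h -> irreflexive h -> linear_forest h -> balanced_form (colour_sum h S).
Proof.
move=> h_sym h_irr h_lf; move: {2}#|S| (leqnn #|S|) => N.
elim: N S => [|N IH] S cS; have [->|S0] := eqVneq S set0;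
  try exact/balanced_form_const/colour_sum_set0.
  by move: cS; rewrite leqn0 cards_eq0 (negbTE S0).
have [u uS u_leaf] := linear_forest_leaf h_lf S0.
have eS : S = u |: (S :\ u) by rewrite setD1K.
have uS1 : u \notin S :\ u by rewrite !inE eqxx.
have cS1 : #|S :\ u| <= N by move: cS; rewrite {1}eS cardsU1 uS1.
have [/exists_inP [w wS huw] | /exists_inP u_iso] := boolP [exists y in S, h u y]; last first.
  apply: (balanced_form_linear (IH _ cS1)) => x y; rewrite {1}eS colour_sum_isolated //.
  by move=> t /setD1P [_ tS]; apply/negP => hut; apply: u_iso; exists t.
have uw : u != w by apply: contraTneq huw => ->; rewrite h_irr.
set S' := S :\ u :\ w.
have eS' : S = u |: (w |: S') by rewrite /S' setD1K // !inE eq_sym uw.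
have [wS' uS'] : w \notin S' /\ u \notin S' by rewrite !inE !eqxx andbF.
have cS' : #|S'| <= N by apply: leq_trans cS1; rewrite /S' subset_leq_card // subD1set.
have inS t : t \in S' -> t \in S by rewrite eS' !inE => ->; rewrite !orbT.
have u_iso : {in S', forall t, ~~ h u t}.
  move=> t tS'; apply: contraNN wS' => hut.
  by rewrite -(u_leaf t w (inS t tS') wS hut huw).
have [/exists_inP [z zS' hwz] | /exists_inP w_iso] := boolP [exists z in S', h w z].
  apply: (balanced_form_pair (c := 1) (IH _ cS')) => x y.
  rewrite eS' (colour_sum_pendant h_sym h_irr uS' wS' uw huw u_iso (c := 1)) // => d _.
  apply: (pendant_colours_forced _ zS' hwz) => t tS' hwt.
  apply: (linear_forest_third_nbr h_lf (w := w) (u := u)) => //; first by rewrite h_sym.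
    by apply: contraNneq uS' => ->.
  by apply: contraNneq uS' => <-.
apply: (balanced_form_pair (c := 2) (IH _ cS')) => x y.
rewrite eS' (colour_sum_pendant h_sym h_irr uS' wS' uw huw u_iso (c := 2)) // => d _.
by apply: pendant_colours_free => t tS'; apply/negP => hwt; apply: w_iso; exists t.
Qed.

Section ColouredInjections.
Variables (V T : finType) (b : {ffun V -> T}) (R1 R0 : {set T}) (d : {ffun V -> bool}).
Hypothesis R_disj : [disjoint R1 & R0].

Definition side (c : bool) : {set T} := if c then R1 else R0.

Definition coloured_injections (S : {set V}) : {set {ffun V -> T}} :=
  [set f : {ffun V -> T} | [forall x, (x \notin S) ==> (f x == b x)] &&
     [forall x in S, f x \in side (d x)] &&
     [forall x in S, forall y in S, (f x == f y) ==> (x == y)]].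

Lemma coloured_injectionsP (S : {set V}) (f : {ffun V -> T}) :
  reflect [/\ forall x, x \notin S -> f x = b x, {in S, forall x, f x \in side (d x)}
            & {in S &, injective f}]
          (f \in coloured_injections S).
Proof.
rewrite inE; apply: (iffP andP) => [[/andP [/forallP off /forall_inP sd] /forall_inP inj]|].
  split=> [x xS|//|x y xS yS fxy]; first exact/eqP/(implyP (off x)).
  by apply/eqP; move/forall_inP: (inj x xS) => /(_ y yS) /implyP; apply; apply/eqP.
case=> off sd inj; split; first (apply/andP; split).
- by apply/forallP => x; apply/implyP => xS; rewrite off.
- exact/forall_inP.
by apply/forall_inP => x xS; apply/forall_inP => y yS; apply/implyP => /eqP /inj ->.
Qed.

Lemma side_inj c c' t : t \in side c -> t \in side c' -> c = c'.
Proof.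
have R10 : t \in R1 -> t \in R0 -> False by move=> /(disjointFr R_disj) ->.
by case: c; case: c' => //= ? ?; exfalso; apply: R10.
Qed.

Lemma card_side_image (S : {set V}) u f : f \in coloured_injections S ->
  #|side (d u) :&: f @: S| = #|[set z in S | d z == d u]|.
Proof.
case/coloured_injectionsP=> _ sd inj.
have -> : side (d u) :&: f @: S = f @: [set z in S | d z == d u].
  apply/setP => t; rewrite inE; apply/andP/imsetP => [[tR /imsetP [z zS tE]]|[z]].
    by subst t; exists z => //; rewrite inE zS (side_inj (sd z zS) tR) /=.
  by rewrite inE => /andP [zS /eqP <-] ->; split; [exact: sd | exact: imset_f].
by rewrite card_in_imset // => x y; rewrite !inE => /andP [xS _] /andP [yS _]; exact: inj.
Qed.

Lemma coloured_injections_fiber (S : {set V}) u f : u \notin S -> f \in coloured_injections S ->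
  [set g in coloured_injections (u |: S) | upd g u (b u) == f] =
  upd f u @: (side (d u) :\: f @: S).
Proof.
move=> uS /coloured_injectionsP [off sd inj].
have neq z : z \in S -> (z == u) = false by move=> zS; apply: contraNF uS => /eqP <-.
apply/setP => g; rewrite inE; apply/andP/imsetP.
  case=> /coloured_injectionsP [offg sdg injg] /eqP <-; exists (g u).
    rewrite !inE sdg ?setU11 // andbT; apply/imsetP => -[z zS].
    rewrite ffunE neq // => /(injg _ _ (setU11 u S)); rewrite in_setU1 zS orbT => /(_ isT) zu.
    by rewrite zu zS in uS.
  by apply/ffunP => x; rewrite !ffunE; case: eqVneq => [->|_].
case=> t; rewrite in_setD => /andP [tfS tR] ->; split; last first.
  by apply/eqP/ffunP => x; rewrite !ffunE; case: eqVneq => [->|_] //; rewrite off.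
apply/coloured_injectionsP; split=> [x|x|x y].
- by rewrite !inE negb_or ffunE => /andP [/negbTE -> /off].
- by rewrite !inE ffunE => /predU1P [->|xS]; rewrite ?eqxx ?neq ?sd.
rewrite !inE !ffunE => /predU1P [->|xS] /predU1P [->|yS]; rewrite ?eqxx ?neq //.
- by move=> tf; rewrite tf imset_f in tfS.
- by move=> ft; rewrite -ft imset_f in tfS.
exact: inj.
Qed.

Lemma card_coloured_injectionsU1 (S : {set V}) u : u \notin S ->
  #|coloured_injections (u |: S)| =
  #|coloured_injections S| * (#|side (d u)| - #|[set z in S | d z == d u]|).
Proof.
move=> uS; rewrite -sum1_card -sum_nat_const.
apply: (sum_fibers (r := fun g => upd g u (b u))) => [g /coloured_injectionsP [off sd inj]|f fS].
  have neq z : z \in S -> (z == u) = false by move=> zS; apply: contraNF uS => /eqP <-.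
  apply/coloured_injectionsP; split=> [x xS|x xS|x y xS yS]; rewrite !ffunE.
  - by case: eqVneq => [->//|xu]; rewrite off // !inE negb_or xu.
  - by rewrite neq ?sd // !inE xS orbT.
  - by rewrite !neq //; apply: inj; rewrite !inE ?xS ?yS orbT.
rewrite sum1_card -(card_side_image u fS) -cardsD.
rewrite -(card_imset _ (_ : injective (upd f u))); last first.
  by move=> t t' /ffunP /(_ u); rewrite !ffunE eqxx.
by rewrite -coloured_injections_fiber //; apply: eq_card => g; rewrite [RHS]inE.
Qed.

Lemma card_coloured_injections (S : {set V}) :
  #|coloured_injections S| = #|R1| ^_ #|[set z in S | d z]| * #|R0| ^_ #|[set z in S | ~~ d z]|.
Proof.
move: {2}#|S| (leqnn #|S|) => N; elim: N S => [|N IH] S cS;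
  have [->|[u uS]] := set_0Vmem S.
- have sep0 (P : pred V) : [set z in set0 | P z] = set0 by apply/setP => z; rewrite !inE.
  rewrite !sep0 cards0 !ffactn0 (_ : 1 * 1 = #|[set b]|); last by rewrite cards1.
  apply: eq_card => f; rewrite in_set1.
  apply/coloured_injectionsP/eqP => [[off _ _]|->]; last by split=> // x; rewrite inE.
  by apply/ffunP => x; rewrite off ?inE.
- by move: cS; rewrite leqn0 cards_eq0 => /eqP S0; rewrite S0 inE in uS.
- by apply: IH; rewrite cards0.
have uS' : u \notin S :\ u by rewrite !inE eqxx.
have cS' : #|S :\ u| <= N by move: cS; rewrite (cardsD1 u S) uS.
rewrite -(setD1K uS) card_coloured_injectionsU1 // IH // !card_sep_setU1 //.
case: (d u) => /=; rewrite add1n add0n ffactnSr.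
  have -> : [set z in S :\ u | d z == true] = [set z in S :\ u | d z].
    by apply/setP => z; rewrite !inE eqb_id.
  by rewrite mulnAC.
have -> : [set z in S :\ u | d z == false] = [set z in S :\ u | ~~ d z].
  by apply/setP => z; rewrite !inE eqbF_neg.
by rewrite mulnA.
Qed.

End ColouredInjections.

Section Embeddings.
Variables (V : finType) (h : rel V) (n : nat).

Definition embeddings (G : rel 'I_n) : {set {ffun V -> 'I_n}} :=
  [set f : {ffun V -> 'I_n} | injectiveb f && [forall x, forall y, h x y ==> G (f x) (f y)]].

Lemma embeddingsP (G : rel 'I_n) (f : {ffun V -> 'I_n}) :
  reflect (injective f /\ forall x y, h x y -> G (f x) (f y)) (f \in embeddings G).
Proof.
rewrite inE; apply: (iffP andP) => [[/injectiveP inj /forallP edge]|[inj edge]].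
  by split=> // x y; apply/implyP; move/forallP: (edge x).
by split; [exact/injectiveP | apply/forallP => x; apply/forallP => y; apply/implyP/edge].
Qed.

Definition trace (U : {set 'I_n}) (f : {ffun V -> 'I_n}) : {ffun V -> option 'I_n} :=
  [ffun x => if f x \in U then None else Some (f x)].

Lemma trace_eqP (U : {set 'I_n}) (f g : {ffun V -> 'I_n}) :
  reflect ((forall x, (f x \in U) = (g x \in U)) /\ (forall x, g x \notin U -> f x = g x))
          (trace U f == trace U g).
Proof.
apply: (iffP eqP) => [fg|[fgU fg]]; last first.
  by apply/ffunP => x; rewrite !ffunE fgU; case: ifPn => // /fg ->.
have {}fg x : (if f x \in U then None else Some (f x)) = if g x \in U then None else Some (g x).
  by move/ffunP: fg => /(_ x); rewrite !ffunE.
split=> x; first by have := fg x; do 2!case: ifP => //.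
by move/negPf => gx; have := fg x; rewrite gx; case: ifP => // _ [].
Qed.

Section TwoParts.
Variables (k : nat) (p : 'I_n -> 'I_k) (i j : 'I_k) (U X : {set 'I_n}).
Hypothesis ij : i != j.
Hypothesis UE : forall z, (z \in U) = (p z == i) || (p z == j).
Hypothesis XE : forall z, (z \in X) = (p z == i).
Variable f0 : {ffun V -> 'I_n}.
Hypothesis f0_inj : injective f0.
Let S := [set x | f0 x \in U].
Hypothesis f0_edge : forall x y, x \notin S -> y \notin S -> h x y -> p (f0 x) != p (f0 y).

Lemma XU z : z \in X -> z \in U.
Proof. by rewrite XE UE => ->. Qed.

Lemma kpartite_in_U a b : a \in U -> b \in U -> kpartite p a b = ((a \in X) != (b \in X)).
Proof.
have [ijF jiF] : (i == j) = false /\ (j == i) = false by rewrite [j == i]eq_sym (negbTE ij).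
by rewrite /kpartite !UE !XE => /orP [] /eqP -> /orP [] /eqP ->; rewrite ?eqxx ?ijF ?jiF.
Qed.

Lemma kpartite_across a b : a \in U -> b \notin U -> kpartite p a b.
Proof. by rewrite /kpartite !UE negb_or => /orP [] /eqP -> /andP [? ?]; rewrite eq_sym. Qed.

Let fiber := [set f in embeddings (kpartite p) | trace U f == trace U f0].
Let colour_in_X (f : {ffun V -> 'I_n}) : {ffun V -> bool} := [ffun x => (x \in S) && (f x \in X)].

Lemma fiberP f : f \in fiber ->
  [/\ injective f, forall x y, h x y -> kpartite p (f x) (f y),
      forall x, (f x \in U) = (x \in S) & forall x, x \notin S -> f x = f0 x].
Proof.
rewrite inE => /andP [/embeddingsP [inj edge] /trace_eqP [fU off]].
by split=> // x; rewrite inE; [exact: fU | exact: off].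
Qed.

Lemma colour_in_X_colouring f : f \in fiber -> colour_in_X f \in colourings h S.
Proof.
case/fiberP=> _ edge fU _; apply/colouringsP; split=> [x /negPf|x y xS yS /edge]; rewrite !ffunE.
  by move->.
by rewrite xS yS kpartite_in_U ?fU.
Qed.

Lemma coloured_injection_fiber d f : d \in colourings h S ->
  f \in coloured_injections f0 X (U :\: X) d S -> f \in fiber /\ colour_in_X f = d.
Proof.
case/colouringsP=> d_off d_prop /coloured_injectionsP [off sd inj].
have fU x : x \in S -> f x \in U.
  by move=> /sd; case: (d x) => [/XU|]; rewrite ?inE => // /andP [].
have fX x : x \in S -> (f x \in X) = d x.
  by move=> /sd; case: (d x) => //; rewrite inE => /andP [/negPf].
have f_U x : (f x \in U) = (x \in S).
  case: (boolP (x \in S)) => xS; first by rewrite fU.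
  by rewrite off //; move: xS; rewrite inE => /negPf.
split; last first.
  apply/ffunP => x; rewrite ffunE.
  by case: (boolP (x \in S)) => xS; [rewrite fX | rewrite d_off].
rewrite inE; apply/andP; split; last first.
  by apply/trace_eqP; split=> [x|x xU]; [rewrite f_U inE | rewrite off // inE].
apply/embeddingsP; split=> [x y|x y hxy].
  case: (boolP (x \in S)) => xS; case: (boolP (y \in S)) => yS; try exact: inj.
  - by move=> fxy; have := f_U y; rewrite -fxy f_U xS (negPf yS).
  - by move=> fxy; have := f_U x; rewrite fxy f_U yS (negPf xS).
  by rewrite !off //; apply: f0_inj.
case: (boolP (x \in S)) => xS; case: (boolP (y \in S)) => yS.
- by rewrite kpartite_in_U ?fU ?fX //; apply: d_prop.
- by apply: kpartite_across; rewrite ?f_U.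
- by rewrite /kpartite eq_sym; apply: kpartite_across; rewrite ?f_U.
by rewrite !off //; apply: f0_edge.
Qed.

Lemma colour_class_fiber d : d \in colourings h S ->
  [set f in fiber | colour_in_X f == d] = coloured_injections f0 X (U :\: X) d S.
Proof.
move=> dS; apply/setP => f; rewrite inE; apply/andP/idP; last first.
  by case/(coloured_injection_fiber dS) => -> ->.
case=> /fiberP [inj _ fU off] /eqP <-; apply/coloured_injectionsP.
split=> [x /off //|x xS|x y _ _ /inj //]; rewrite ffunE xS /=.
by case fX: (f x \in X); rewrite /= ?inE ?fX ?fU.
Qed.

Lemma card_embeddings_trace : #|fiber| = colour_sum h S #|X| #|U :\: X|.
Proof.
rewrite -sum1_card; apply: (sum_fibers (r := colour_in_X)) => [f|d dS].
  exact: colour_in_X_colouring.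
rewrite sum1_card -(card_coloured_injections f0 (R1 := X)); last first.
  by rewrite -setI_eq0; apply/eqP/setP => t; rewrite !inE; case: (t \in X).
by rewrite -colour_class_fiber //; apply: eq_card => f; rewrite [RHS]inE.
Qed.

End TwoParts.
End Embeddings.

Section Relocation.
Variables (V : finType) (h : rel V).
Hypotheses (h_sym : symmetric h) (h_irr : irreflexive h) (h_lf : linear_forest h).
Variables (n k : nat).

Definition part (p : 'I_n -> 'I_k) (j : 'I_k) : {set 'I_n} := [set z | p z == j].

Definition relocate (p : 'I_n -> 'I_k) (v : 'I_n) (j : 'I_k) : 'I_n -> 'I_k :=
  fun x => if x == v then j else p x.

Lemma card_embeddings_by_trace (G : rel 'I_n) (U : {set 'I_n}) :
  #|embeddings h G| =
  \sum_(o in [set: {ffun V -> option 'I_n}]) #|[set f in embeddings h G | trace U f == o]|.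
Proof.
rewrite -sum1_card; apply: (sum_fibers (r := trace U)) => [f _|o _]; first by rewrite inE.
by rewrite sum1_card; apply: eq_card => f; rewrite [RHS]inE.
Qed.

Lemma embeddings_relocate (p : 'I_n -> 'I_k) (v : 'I_n) (j : 'I_k) :
  p v != j -> #|part p j| < #|part p (p v)| ->
  #|embeddings h (kpartite p)| <= #|embeddings h (kpartite (relocate p v j))|.
Proof.
set i := p v; set p' := relocate p v j => ij lt_ji.
set U := part p i :|: part p j.
have UE z : (z \in U) = (p z == i) || (p z == j) by rewrite !inE.
have XE z : (z \in part p i) = (p z == i) by rewrite inE.
have vU : v \in U by rewrite UE eqxx.
have UE' z : (z \in U) = (p' z == i) || (p' z == j).
  by rewrite /p' /relocate; case: (eqVneq z v) => [->|_]; rewrite ?vU ?eqxx ?orbT ?UE.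
have XE' z : (z \in part p i :\ v) = (p' z == i).
  by rewrite !inE /p' /relocate; case: (eqVneq z v) => [->|_] /=; rewrite 1?eq_sym ?(negbTE ij).
(* Relocating v keeps U = A_i :|: A_j, so both counts split along traces on U. *)
rewrite !(card_embeddings_by_trace _ U); apply: leq_sum => o _.
have [->|[f0]] := set_0Vmem [set f in embeddings h (kpartite p) | trace U f == o].
  by rewrite cards0.
rewrite inE => /andP [/embeddingsP [f0_inj f0_edge] /eqP <-].
have f0_edge' x y : x \notin [set x | f0 x \in U] -> y \notin [set x | f0 x \in U] ->
    h x y -> p' (f0 x) != p' (f0 y).
  have nv z : z \notin [set x | f0 x \in U] -> (f0 z == v) = false.
    by rewrite inE; apply: contraNF => /eqP ->.
  by move=> xS yS /f0_edge; rewrite /p' /relocate !nv.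
rewrite (card_embeddings_trace ij UE XE f0_inj (fun x y _ _ => f0_edge x y)).
rewrite (card_embeddings_trace ij UE' XE' f0_inj f0_edge').
have vX : v \in part p i by rewrite inE.
have -> : #|part p i :\ v| = #|part p i|.-1 by rewrite (cardsD1 v (part p i)) vX.
have -> : U :\: (part p i :\ v) = v |: (U :\: part p i).
  by apply/setP => z; rewrite !inE; case: (eqVneq z v) => [->|_]; rewrite ?eqxx.
have -> : U :\: part p i = part p j.
  by apply/setP => z; rewrite !inE; case: (eqVneq (p z) i) => [->|_]; rewrite ?(negbTE ij).
have vj : v \notin part p j by rewrite inE.
rewrite cardsU1 vj add1n.
exact: balanced_form_le (colour_sum_balanced _ h_sym h_irr h_lf) lt_ji.
Qed.

End Relocation.

Lemma eq_set2 (T : finType) (a b c d : T) : [set a; b] = [set c; d] ->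
  a = c /\ b = d \/ a = d /\ b = c.
Proof.
move=> E; have /set2P [] : a \in [set c; d] by rewrite -E set21.
all: have /set2P [] : b \in [set c; d] by rewrite -E set22.
all: have /set2P [] : c \in [set a; b] by rewrite E set21.
all: have /set2P [] : d \in [set a; b] by rewrite E set22.
all: by move=> *; subst; tauto.
Qed.

Section Copies.
Variables (V : finType) (h : rel V) (n : nat) (G : rel 'I_n).
Hypotheses (h_sym : symmetric h) (G_sym : symmetric G).

Definition edges_of (f : {ffun V -> 'I_n}) : {set {set 'I_n}} :=
  [set [set f xy.1; f xy.2] | xy in [set xy : V * V | h xy.1 xy.2]].

Definition copy_of (f : {ffun V -> 'I_n}) := (f @: [set: V], edges_of f).

Definition copies := [set WF : {set 'I_n} * {set {set 'I_n}} | is_copy h G WF.1 WF.2].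

Definition automorphisms : {set {ffun V -> V}} :=
  [set s : {ffun V -> V} | injectiveb s && [forall x, forall y, h x y == h (s x) (s y)]].

Lemma automorphismsP (s : {ffun V -> V}) :
  reflect (bijective s /\ forall x y, h x y = h (s x) (s y)) (s \in automorphisms).
Proof.
rewrite inE; apply: (iffP andP) => [[/injectiveP /injF_bij s_bij /forallP s_h]|[s_bij s_h]].
  by split=> // x y; apply/eqP; move/forallP: (s_h x).
split; first exact/injectiveP/bij_inj.
by apply/forallP => x; apply/forallP => y; rewrite s_h.
Qed.

Lemma edges_of_mem (f : {ffun V -> 'I_n}) :
  injective f -> forall x y, ([set f x; f y] \in edges_of f) = h x y.
Proof.
move=> f_inj x y; apply/imsetP/idP => [[[a b]]|hxy]; last by exists (x, y); rewrite ?inE.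
by rewrite inE /= => hab /eq_set2 [[/f_inj -> /f_inj ->]|[/f_inj -> /f_inj ->]]; rewrite // h_sym.
Qed.

Lemma copy_of_embedding f : f \in embeddings h G -> copy_of f \in copies.
Proof.
case/embeddingsP=> f_inj f_edge; rewrite inE /is_copy /=; apply/andP; split.
  apply/forall_inP => A /imsetP [[x y]]; rewrite inE /= => hxy ->.
  apply/existsP; exists (f x); apply/existsP; exists (f y).
  by rewrite !imset_f ?inE //= f_edge ?eqxx.
apply/existsP; exists f; rewrite eqxx; apply/and3P; split=> //; first exact/injectiveP.
by apply/forallP => x; apply/forallP => y; rewrite edges_of_mem.
Qed.

Lemma copy_of_onto c : c \in copies -> exists2 f, f \in embeddings h G & copy_of f = c.
Proof.
case: c => W F; rewrite inE /is_copy /= => /andP [/forall_inP F_edges].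
case/existsP=> f /and3P [/injectiveP f_inj /eqP fW /forallP f_F].
have hF x y : h x y = ([set f x; f y] \in F) by apply/eqP; move/forallP: (f_F x).
exists f.
  apply/embeddingsP; split=> // x y; rewrite hF => /F_edges /existsP [a /existsP [b]].
  by case/and4P=> _ _ Gab /eqP /eq_set2 [[-> ->]|[-> ->]]; rewrite // G_sym.
rewrite /copy_of fW; congr (_, _); apply/setP => A; apply/imsetP/idP.
  by case=> -[x y]; rewrite inE /= => hxy ->; rewrite -hF.
move=> AF; have /existsP [a /existsP [b /and4P [aW bW _ /eqP AE]]] := F_edges _ AF.
rewrite -fW in aW bW; case/imsetP: aW => x _ ax; case/imsetP: bW => y _ bE.
by exists (x, y); rewrite /= -?ax -?bE // inE /= hF -ax -bE -AE.
Qed.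

Lemma embedding_comp_automorphism f s : f \in embeddings h G -> s \in automorphisms ->
  [ffun x => f (s x)] \in embeddings h G /\ copy_of [ffun x => f (s x)] = copy_of f.
Proof.
case/embeddingsP=> f_inj f_edge /automorphismsP [[s' ss' s's] s_h].
have s_onto a : a = s (s' a) by rewrite s's.
split.
  apply/embeddingsP; split=> [x y|x y hxy]; rewrite !ffunE; last by rewrite f_edge // -s_h.
  by move/f_inj/(can_inj ss').
congr (_, _); apply/setP => A; apply/imsetP/imsetP.
- by case=> x _ ->; exists (s x); rewrite ?ffunE.
- by case=> a _ ->; exists (s' a); rewrite ?ffunE -?s_onto.
- by case=> -[x y]; rewrite inE /= => hxy ->; exists (s x, s y); rewrite ?inE /= -?s_h ?ffunE.
case=> -[a b]; rewrite inE /= => hab ->; exists (s' a, s' b); last by rewrite /= !ffunE -!s_onto.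
by rewrite inE /= s_h -!s_onto.
Qed.

Lemma embedding_same_copy f f0 : f \in embeddings h G -> f0 \in embeddings h G ->
  copy_of f = copy_of f0 -> exists2 s, s \in automorphisms & f = [ffun x => f0 (s x)].
Proof.
move=> /embeddingsP [f_inj _] /embeddingsP [f0_inj _] [fim fedges].
have onto x : exists y, f0 y == f x.
  have : f x \in f0 @: [set: V] by rewrite -fim imset_f.
  by case/imsetP=> y _ ->; exists y.
pose s := [ffun x => odflt x [pick y | f0 y == f x]].
have sE x : f0 (s x) = f x.
  by rewrite ffunE; case: pickP => [y /eqP //|none]; case: (onto x) => y; rewrite none.
exists s; last by apply/ffunP => x; rewrite ffunE sE.
apply/automorphismsP; split.
  by apply/injF_bij => x y sxy; apply: f_inj; rewrite -!sE sxy.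
by move=> x y; rewrite -(edges_of_mem f_inj) fedges -!sE (edges_of_mem f0_inj).
Qed.

Lemma card_copy_fiber c : c \in copies ->
  #|[set f in embeddings h G | copy_of f == c]| = #|automorphisms|.
Proof.
case/copy_of_onto=> f0 f0E <-.
have f0_inj : injective f0 by case/embeddingsP: f0E.
rewrite -(card_imset _ (_ : injective (fun s : {ffun V -> V} => [ffun x => f0 (s x)]))); last first.
  by move=> s s' /ffunP ss'; apply/ffunP => x; apply: f0_inj; have := ss' x; rewrite !ffunE.
apply: eq_card => f; rewrite inE; apply/andP/imsetP => [[fE /eqP]|[s sA ->]].
  exact: embedding_same_copy.
by have [-> ->] := embedding_comp_automorphism f0E sA.
Qed.

Lemma card_embeddings : #|embeddings h G| = Ncopies h G * #|automorphisms|.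
Proof.
rewrite -sum1_card -sum_nat_const /Ncopies.
apply: (sum_fibers (r := copy_of)) => [f|c cC]; first exact: copy_of_embedding.
by rewrite -(card_copy_fiber cC) sum1_card; apply: eq_card => f; rewrite [RHS]inE.
Qed.

Lemma automorphisms_gt0 : 0 < #|automorphisms|.
Proof.
apply/card_gt0P; exists [ffun x => x]; apply/automorphismsP.
by split=> [|x y]; rewrite ?ffunE //; exists [ffun x => x] => x; rewrite !ffunE.
Qed.

End Copies.

Section Balancing.
Variables (V : finType) (h : rel V).
Hypotheses (h_sym : symmetric h) (h_irr : irreflexive h) (h_lf : linear_forest h).
Variables (n k : nat).
Implicit Types p q : 'I_n -> 'I_k.

Lemma card_embeddings_eq p q : p =1 q ->
  #|embeddings h (kpartite p)| = #|embeddings h (kpartite q)|.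
Proof.
move=> pq; apply: eq_card => f; rewrite !inE /kpartite.
by congr (_ && _); apply: eq_forallb => x; apply: eq_forallb => y; rewrite !pq.
Qed.

Lemma card_embeddings_relabel p (s : {perm 'I_n}) :
  #|embeddings h (kpartite (p \o s))| = #|embeddings h (kpartite p)|.
Proof.
have comp_inj : injective (fun f : {ffun V -> 'I_n} => [ffun x => s (f x)]).
  by move=> f g /ffunP fg; apply/ffunP => x; have := fg x; rewrite !ffunE => /perm_inj.
rewrite -(card_imset _ comp_inj); apply: eq_card => g; apply/imsetP/embeddingsP.
  case=> f /embeddingsP [f_inj f_edge] ->.
  by split=> [x y|x y /f_edge]; rewrite !ffunE // => /perm_inj /f_inj.
case=> g_inj g_edge; exists [ffun x => (s^-1)%g (g x)].
  apply/embeddingsP; split=> [x y|x y /g_edge]; rewrite !ffunE ?/kpartite /= ?permKV //.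
  by move/perm_inj/g_inj.
by apply/ffunP => x; rewrite !ffunE permKV.
Qed.

Lemma sum_card_part p : \sum_(j < k) #|part p j| = n.
Proof.
rewrite -[RHS](card_ord n) -sum1_card (partition_big p predT) //=.
by apply: eq_bigr => j _; rewrite -sum1_card; apply: eq_bigl => z; rewrite inE.
Qed.

Lemma card_embeddings_part_sizes p q : (forall j, #|part p j| = #|part q j|) ->
  #|embeddings h (kpartite p)| = #|embeddings h (kpartite q)|.
Proof.
move: {2}#|[set x | p x != q x]| (erefl #|[set x | p x != q x]|) => N.
elim/ltn_ind: N p => N IH p pN part_pq.
have [/setP mismatch0|[v]] := set_0Vmem [set x | p x != q x].
  by apply: card_embeddings_eq => x; apply/eqP/negPn; have := mismatch0 x; rewrite !inE => ->.
rewrite inE => pv.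
(* Swap v with a vertex w that p, but not q, puts in the part q v: the set of
   disagreements loses v and gains nothing. *)
have [w]: exists w, (w \in part p (q v)) && (w \notin part q (q v)).
  apply/existsP; apply: contraT; rewrite negb_exists => /forallP sub.
  have psub : part p (q v) \subset part q (q v).
    by apply/subsetP => w wp; have := sub w; rewrite wp /= negbK.
  have /eqP/setP/(_ v) : part p (q v) == part q (q v) by rewrite eqEcard psub part_pq /=.
  by rewrite !inE eqxx (negbTE pv).
rewrite !inE => /andP [/eqP pw qw].
rewrite -(card_embeddings_relabel p (tperm v w)).
apply: (IH #|[set x | p (tperm v w x) != q x]|) => // [|j]; last first.
  have -> : part (p \o tperm v w) j = tperm v w @^-1: part p j by apply/setP => z; rewrite !inE.
  by rewrite card_preimset //; exact: perm_inj.
rewrite -pN; apply: (@proper_card _ _ [set x | p x != q x]); apply/properP; split.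
  apply/subsetP => x; rewrite !inE; case: (tpermP v w x) => [->|->|xv xw] //.
  by move=> _; rewrite pw eq_sym.
by exists v; rewrite !inE ?tpermL ?pw ?eqxx.
Qed.

Definition excess p q := \sum_(j < k) (#|part p j| - #|part q j|).

Lemma card_part_relocate p v j l : p v != j ->
  #|part (relocate p v j) l| =
    if l == j then #|part p l|.+1 else if l == p v then #|part p l|.-1 else #|part p l|.
Proof.
move=> pvj; case: (eqVneq l j) => [->|lj].
  have -> : part (relocate p v j) j = v |: part p j.
    apply/setP => z; rewrite /relocate !inE.
    by case: (eqVneq z v) => [->|_] /=; first exact: eqxx.
  by rewrite cardsU1 inE (negbTE pvj).
have -> : part (relocate p v j) l = part p l :\ v.
  apply/setP => z; rewrite /relocate !inE.
  by case: (eqVneq z v) => [->|] /=; rewrite // eq_sym (negbTE lj).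
rewrite [in RHS](cardsD1 v) inE eq_sym.
by case: (eqVneq l (p v)).
Qed.

Lemma turan_card_part q l : turan_parts q -> n %/ k <= #|part q l| <= (n %/ k).+1.
Proof.
move/forallP/(_ l); rewrite /ceil_div -addn1.
by case: (~~ (k %| n)) => /orP [] /eqP ->; rewrite ?addn0 ?leqnn ?leq_addr.
Qed.

Lemma card_embeddings_le_turan p q : turan_parts q ->
  #|embeddings h (kpartite p)| <= #|embeddings h (kpartite q)|.
Proof.
move=> q_turan; move: {2}(excess p q) (erefl (excess p q)) => N.
elim/ltn_ind: N p => N IH p pN.
have sum_pq : \sum_(j < k) #|part p j| = \sum_(j < k) #|part q j| by rewrite !sum_card_part.
have [/existsP [i lt_qp]|] := boolP [exists i, #|part q i| < #|part p i|]; last first.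
  rewrite negb_exists => /forallP le_pq; apply/eq_leq/card_embeddings_part_sizes.
  by apply: eq_of_leq_sum sum_pq => j; rewrite leqNgt le_pq.
have [j lt_pq] := exists_lt_of_sum_eq sum_pq lt_qp.
have lt_ji : #|part p j| < #|part p i|.
  have /andP [q_lb _] := turan_card_part i q_turan.
  have /andP [_ q_ub] := turan_card_part j q_turan.
  by apply: leq_ltn_trans (leq_ltn_trans q_lb lt_qp); rewrite -ltnS (leq_trans lt_pq).
have ij : i != j by apply: contraTneq lt_ji => ->; rewrite ltnn.
have /set0Pn [v] : part p i != set0 by rewrite -card_gt0; lia.
rewrite inE => /eqP pv; subst i.
apply: leq_trans (embeddings_relocate h_sym h_irr h_lf ij lt_ji) _.
apply: (IH (excess (relocate p v j) q)) => //; rewrite -pN.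
apply: (ltn_sum (i := p v)) => [l|]; rewrite card_part_relocate //.
  case: eqVneq => [->|_]; first by rewrite (_ : _ - _ = 0) //; lia.
  by case: eqVneq => // _; lia.
by rewrite (negbTE ij) eqxx; lia.
Qed.

End Balancing.

Theorem theorem3 (V : finType) (h : rel V)
    (h_sym : symmetric h) (h_irr : irreflexive h) (h_lf : linear_forest h)
    (k n : nat) (hk : 1 <= k) (hn : 1 <= n)
    (p q : 'I_n -> 'I_k) (hq : turan_parts q) :
  Ncopies h (kpartite p) <= Ncopies h (kpartite q).
Proof.
have G_sym (r : 'I_n -> 'I_k) : symmetric (kpartite r) by move=> x y; rewrite /kpartite eq_sym.
rewrite -(leq_pmul2r (automorphisms_gt0 h)).
rewrite -!(card_embeddings h_sym (G_sym _)).
exact: card_embeddings_le_turan.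
Qed.
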